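(* Let $\mathcal{I}$ and $\mathcal{F}$ be the sets of initial and final states of the NFA $\mathcal{A}$, and $M=\mathcal{I}\times\mathcal{F}$. For $\mu=(I,F)\in M$ with $F=((d_1,d_2),e_1,e_2,\kappa)$, let $R_\mu$ be the set of words labelling a path in $\mathcal{A}$ from $I$ to $F$, and let $B_\mu=B(d_1,d_2,e_1,e_2)$. Then $\mathcal{H}_\kappa(L_1,L_2)=\bigcup_{\mu\in M}B_\mu^{R_\mu}$, and the sets $B_\mu^{R_\mu}$, $\mu\in M$, are pairwise disjoint. Moreover, for every $\mu\in M$, every $\beta\in B_\mu$ and every $v\in R_\mu$, the minimal gamma-alpha-prefix of $v\beta\bar v$ is $v$.
   Context: $\Sigma$ is a finite alphabet with at least two letters with an involution $a\mapsto\bar a$ ($\bar{\bar a}=a$), extended to words by $\overline{a_1\cdots a_m}=\bar a_m\cdots\bar a_1$ and to languages elementwise. $\kappa$ is a fixed positive integer. $\mathcal{H}_\kappa(L_1,L_2)=\{\gamma\alpha\beta\bar\alpha\bar\gamma:|\alpha|\ge\kappa,\ \gamma\alpha\beta\bar\alpha\in L_1\text{ or }\alpha\beta\bar\alpha\bar\gamma\in L_2\}$. $L_1,L_2\subseteq\Sigma^*$ are regular; $\mathcal{A}_1=(Q_1,\Sigma,E_1,\{q_{01}\},F_1)$ is a complete DFA accepting $L_1$, $\mathcal{A}_2=(Q_2,\Sigma,E_2,\{q_{02}\},F_2)$ a complete DFA accepting $\overline{L_2}$; $p\cdot w$ is the state reached from $p$ on $w$. For $\pi\in\mathcal{H}_\kappa(L_1,L_2)$,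 consider all factorizations $\pi=\gamma\alpha\beta\bar\alpha\bar\gamma$ with $|\alpha|=\kappa$ and ($\gamma\alpha\beta\bar\alpha\in L_1$ or $\alpha\beta\bar\alpha\bar\gamma\in L_2$); the minimal gamma-alpha-prefix of $\pi$ is the word $\gamma\alpha$ for such a factorization with $|\gamma|$ minimal. For languages $B,R$, $B^R=\{v\beta\bar v:\beta\in B,v\in R\}$. Construction of $\mathcal{A}$: $Q_{12}=\{(q_{01}\cdot w,q_{02}\cdot w):w\in\Sigma^*\}$ with $(p_1,p_2)\cdot w=(p_1\cdot w,p_2\cdot w)$. For $(p_1,p_2,q_1,q_2)\in Q_1\times Q_2\times Q_1\times Q_2$ let $B(p_1,p_2,q_1,q_2)=\{w\in\Sigma^*:p_1\cdot w=q_1,\ p_2\cdot\bar w=q_2\}$; the quadruple is a basic bridge if this set is nonempty. The states of $\mathcal{A}$ (called bridges) are all $((p_1,p_2),q_1,q_2,\ell)$ with $(p_1,p_2)\in Q_{12}$, $q_i\in Q_i$, $\ell\in\{0,\dots,\kappa\}$ such that $(p_1,p_2,q_1,q_2)$ is a basic bridge. For $a\in\Sigma$, $P\in Q_{12}$, $q_1\in Q_1,q_2\in Q_2$, there is an $a$-labelled arc from $(P,q_1\cdot\bar a,q_2\cdot\bar a,\ell)$ to $(P\cdot a,q_1,q_2,\ell')$, provided both are states, exactly in the cases: $\ell=\ell'=0$ and $q_1\cdot\bar a\notin F_1$, $q_2\cdot\bar a\notin F_2$; or $\ell=0,\ell'=1$ and ($q_1\cdot\bar a\in F_1$ or $q_2\cdot\bar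 a\in F_2$); or $1\le\ell<\kappa$ and $\ell'=\ell+1$. Initial states are those of the form $((q_{01},q_{02}),q_1',q_2',0)$; final states are those with $\ell=\kappa$. *)

From mathcomp Require Import all_boot.
Set Implicit Arguments. Unset Strict Implicit. Unset Printing Implicit Defensive.

Section Words.
Variable S : finType.
Variable bar : S -> S.

Definition wbar (w : seq S) : seq S := rev (map bar w).

Definition run (Q : Type) (d : Q -> S -> Q) (p : Q) (w : seq S) : Q := foldl d p w.

Variable kappa : nat.

Definition Hk (L1 L2 : seq S -> Prop) (pi : seq S) : Prop :=
  exists g a b, pi = g ++ a ++ b ++ wbar a ++ wbar g /\ kappa <= size a /\
    (L1 (g ++ a ++ b ++ wbar a) \/ L2 (a ++ b ++ wbar a ++ wbar g)).

Definition valid_fact (L1 L2 : seq S -> Prop) (pi g a b : seq S) : Prop :=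
  pi = g ++ a ++ b ++ wbar a ++ wbar g /\ size a = kappa /\
    (L1 (g ++ a ++ b ++ wbar a) \/ L2 (a ++ b ++ wbar a ++ wbar g)).

Definition min_ga_prefix (L1 L2 : seq S -> Prop) (pi p : seq S) : Prop :=
  exists g a b, valid_fact L1 L2 pi g a b /\ p = g ++ a /\
    (forall g' a' b', valid_fact L1 L2 pi g' a' b' -> size g <= size g').

Definition hcomp (B R : seq S -> Prop) (pi : seq S) : Prop :=
  exists beta v, B beta /\ R v /\ pi = v ++ beta ++ wbar v.

Section Automaton.
Variables (Q1 Q2 : finType).
Variables (d1 : Q1 -> S -> Q1) (q01 : Q1) (F1 : {set Q1}).
Variables (d2 : Q2 -> S -> Q2) (q02 : Q2) (F2 : {set Q2}).

Definition Q12 (P : Q1 * Q2) : Prop :=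
  exists w, P = (run d1 q01 w, run d2 q02 w).

Definition Bset (p1 : Q1) (p2 : Q2) (q1 : Q1) (q2 : Q2) (w : seq S) : Prop :=
  run d1 p1 w = q1 /\ run d2 p2 (wbar w) = q2.

Definition basic_bridge p1 p2 q1 q2 : Prop := exists w, Bset p1 p2 q1 q2 w.

Definition bstate := ((Q1 * Q2) * Q1 * Q2 * nat)%type.

Definition is_bridge (s : bstate) : Prop :=
  let: (P, q1, q2, l) := s in
  Q12 P /\ basic_bridge P.1 P.2 q1 q2 /\ l <= kappa.

Definition step12 (P : Q1 * Q2) (a : S) : Q1 * Q2 := (d1 P.1 a, d2 P.2 a).

Definition arc (s : bstate) (a : S) (t : bstate) : Prop :=
  exists (P : Q1 * Q2) (q1 : Q1) (q2 : Q2) (l l' : nat),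
    s = (P, d1 q1 (bar a), d2 q2 (bar a), l) /\
    t = (step12 P a, q1, q2, l') /\
    is_bridge s /\ is_bridge t /\
    [\/ [/\ l = 0, l' = 0, d1 q1 (bar a) \notin F1 & d2 q2 (bar a) \notin F2],
        [/\ l = 0, l' = 1 & (d1 q1 (bar a) \in F1 \/ d2 q2 (bar a) \in F2)]
      | [/\ 1 <= l, l < kappa & l' = l.+1]].

Definition is_init (s : bstate) : Prop :=
  is_bridge s /\ exists q1 q2, s = ((q01, q02), q1, q2, 0).

Definition is_final (s : bstate) : Prop := is_bridge s /\ s.2 = kappa.

Fixpoint labels_path (s : bstate) (w : seq S) (t : bstate) : Prop :=
  match w with
  | [::] => s = t
  | a :: w' => exists u, arc s a u /\ labels_path u w' t
  end.

Definition inM (mu : bstate * bstate) : Prop := is_init mu.1 /\ is_final mu.2.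

Definition R_mu (mu : bstate * bstate) (w : seq S) : Prop := labels_path mu.1 w mu.2.

Definition B_mu (mu : bstate * bstate) : seq S -> Prop :=
  let: ((e1', e2'), f1, f2, _) := mu.2 in Bset e1' e2' f1 f2.

End Automaton.
End Words.

From Stdlib Require Classical_Prop Wf_nat.
From Pilot Require Import Defs.
From mathcomp Require Import all_boot zify.
Set Implicit Arguments. Unset Strict Implicit. Unset Printing Implicit Defensive.

(* Along a path of the bridge automaton the pair component advances over the
   prefix of v read so far, while the two remaining components are the states
   that A1 and A2 reach, starting from the final bridge, on the bar of the part
   of v still to be read; hence (beta, v) determines mu.  The counter stays 0
   as long as cutting gamma there gives no accepted factorisation, jumps to 1
   at the first cut that does, and must then count exactly kappa letters.  So
   the words of R_mu are exactly the v whose last kappa letters start at the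
   first valid cut of v beta bar(v): v is the minimal gamma-alpha-prefix.  The
   uniqueness of that prefix gives disjointness, and a factorisation with
   minimal |gamma| yields the covering. *)

Section Words.
Variables (S : finType) (bar : S -> S).
Local Notation wb := (wbar bar).

Lemma wbar_cat x y : wb (x ++ y) = wb y ++ wb x.
Proof. by rewrite /wbar map_cat rev_cat. Qed.

Lemma wbar_cons a x : wb (a :: x) = rcons (wb x) (bar a).
Proof. by rewrite /wbar /= rev_cons. Qed.

Lemma wbarK : involutive bar -> involutive wb.
Proof. by move=> barK x; rewrite /wbar map_rev revK -map_comp (eq_map barK) map_id. Qed.

Lemma run_cat (Q : Type) (d : Q -> S -> Q) p x y : run d p (x ++ y) = run d (run d p x) y.
Proof. by rewrite /run foldl_cat. Qed.

Lemma run_rcons (Q : Type) (d : Q -> S -> Q) p x a : run d p (rcons x a) = d (run d p x) a.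
Proof. by rewrite /run foldl_rcons. Qed.

Lemma cat_inj (x y x' y' : seq S) :
  x ++ y = x' ++ y' -> size x = size x' -> x = x' /\ y = y'.
Proof. by move=> /eqP + size_x; rewrite eqseq_cat // => /andP[/eqP -> /eqP ->]. Qed.

Lemma cat_inj_suffix (x y x' y' : seq S) :
  x ++ y = x' ++ y' -> size y = size y' -> x = x' /\ y = y'.
Proof.
move=> Exy Ey; have size_x : size x = size x'.
  by move/(congr1 size): (Exy); rewrite !size_cat Ey; apply: addIn.
exact: cat_inj Exy size_x.
Qed.

End Words.

Lemma exists_least_nat (P : nat -> Prop) :
  (exists n, P n) -> exists n, P n /\ forall m, P m -> n <= m.
Proof.
move=> exP; have [n [[Pn leastP] _]] :=
  Wf_nat.dec_inh_nat_subset_has_unique_least_element P (fun n => Classical_Prop.classic (P n)) exP.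
by exists n; split=> // m /leastP /leP.
Qed.

Section Automaton.
Variables (S : finType) (bar : S -> S) (kappa : nat).
Variables (Q1 Q2 : finType).
Variables (d1 : Q1 -> S -> Q1) (q01 : Q1) (F1 : {set Q1}).
Variables (d2 : Q2 -> S -> Q2) (q02 : Q2) (F2 : {set Q2}).
Variables (L1 L2 : seq S -> Prop).
Hypothesis barK : involutive bar.
Hypothesis kappa_gt0 : 0 < kappa.
Hypothesis L1E : forall w, L1 w <-> run d1 q01 w \in F1.
Hypothesis L2E : forall w, (exists u, L2 u /\ w = wbar bar u) <-> run d2 q02 w \in F2.

Local Notation wb := (wbar bar).
Local Notation bridge := (is_bridge bar kappa d1 q01 d2 q02).
Local Notation arcA := (Defs.arc bar kappa d1 q01 F1 d2 q02 F2).
Local Notation pathA := (labels_path bar kappa d1 q01 F1 d2 q02 F2).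
Local Notation inMA := (inM bar kappa d1 q01 d2 q02).
Local Notation BA := (B_mu bar d1 d2).
Local Notation RA := (R_mu bar kappa d1 q01 F1 d2 q02 F2).
Local Notation valid := (valid_fact bar kappa L1 L2).
Local Notation min_prefix := (min_ga_prefix bar kappa L1 L2).

Lemma run_step12 P w : run (step12 d1 d2) P w = (run d1 P.1 w, run d2 P.2 w).
Proof. by elim: w P => [|a w IHw] [p1 p2] //; apply: IHw. Qed.

Lemma labels_path_runs s w t : pathA s w t ->
  [/\ t.1.1.1 = run (step12 d1 d2) s.1.1.1 w,
      s.1.1.2 = run d1 t.1.1.2 (wb w) & s.1.2 = run d2 t.1.2 (wb w)].
Proof.
elim: w s => [|a w IHw] s /=; first by move->.
case=> u [[P [q1 [q2 [l [l' [-> [-> _]]]]]]] /IHw [/= -> -> ->]].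
by rewrite wbar_cons !run_rcons.
Qed.

Lemma labels_path_counting s w t : pathA s w t -> 0 < s.2 -> t.2 = s.2 + size w.
Proof.
elim: w s => [|a w IHw] s /=; first by move-> => _; rewrite addn0.
case=> u [[P [q1 [q2 [l [l' [-> [-> [_ [_ lvl]]]]]]]]] pu] /= l_gt0.
case: lvl => [[l0]|[l0]|[_ _ El']]; try by rewrite l0 in l_gt0.
by rewrite El' in pu; rewrite (IHw _ pu) //= addSnnS.
Qed.

Definition accepts_back (t : bstate Q1 Q2) (w : seq S) (k : nat) : Prop :=
  run d1 t.1.1.2 (wb (drop k w)) \in F1 \/ run d2 t.1.2 (wb (drop k w)) \in F2.

Lemma labels_path_first_cut s w t : pathA s w t -> s.2 = 0 -> t.2 = kappa ->
  [/\ kappa <= size w, forall k, k < size w - kappa -> ~ accepts_back t w k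
    & accepts_back t w (size w - kappa)].
Proof.
elim: w s => [|a w IHw] s /=; first by move-> => -> kappa0; move: kappa_gt0; rewrite -kappa0.
move=> [u [[P [q1 [q2 [l [l' [Es [Eu [_ [_ lvl]]]]]]]]] pu]] s0 t_kappa.
have [_ Eu1 Eu2] := labels_path_runs pu.
rewrite Es /= in s0; rewrite Eu /= in Eu1 Eu2 pu.
have accepts_0 : accepts_back t (a :: w) 0 <->
    d1 q1 (bar a) \in F1 \/ d2 q2 (bar a) \in F2.
  by rewrite /accepts_back /= wbar_cons !run_rcons -Eu1 -Eu2.
case: lvl => [[_ l'0 N1 N2]|[_ l'1 F12]|[l_gt0 _ _]]; last by rewrite s0 in l_gt0.
- have [le_kw before first] := IHw _ pu l'0 t_kappa.
  rewrite /= subSn //; split=> //; first exact: leqW.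
  by case=> [_ /accepts_0[] acc|k /before //]; rewrite acc in N1 N2.
- have := labels_path_counting pu; rewrite l'1 t_kappa => /(_ isT) /= ->.
  by rewrite add1n subnn; split=> //; apply/accepts_0.
Qed.

(* The L1/L2 condition for the factorisation of [v ++ beta ++ wb v] with gamma = [take k v]. *)
Definition valid_cut (v beta : seq S) (k : nat) : Prop :=
  L1 (v ++ beta ++ wb (drop k v)) \/ L2 (drop k v ++ beta ++ wb v).

Lemma valid_cutE v beta k :
  (run d1 (run d1 q01 (v ++ beta)) (wb (drop k v)) \in F1 \/
   run d2 (run d2 (run d2 q02 v) (wb beta)) (wb (drop k v)) \in F2) <-> valid_cut v beta k.
Proof.
rewrite /valid_cut -!run_cat -catA -L1E -L2E.
have -> : v ++ wb beta ++ wb (drop k v) = wb (drop k v ++ beta ++ wb v).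
  by rewrite !wbar_cat (wbarK barK) catA.
split; case=> [|accL2]; [by left | right | by left | right].
- by case: accL2 => u [L2u /(congr1 wb)]; rewrite !(wbarK barK) => ->.
- by exists (drop k v ++ beta ++ wb v).
Qed.

Lemma valid_fact_of_cut_cat g a c beta : size a = kappa ->
  valid_cut (g ++ a ++ c) beta (size g) ->
  valid ((g ++ a ++ c) ++ beta ++ wb (g ++ a ++ c)) g a (c ++ beta ++ wb c).
Proof.
by move=> size_a; rewrite /valid_cut /valid_fact drop_size_cat // !wbar_cat -!catA.
Qed.

Lemma valid_fact_of_cut v beta k : k + kappa <= size v -> valid_cut v beta k ->
  valid (v ++ beta ++ wb v) (take k v) (take kappa (drop k v))
     (drop kappa (drop k v) ++ beta ++ wb (drop kappa (drop k v))).
Proof.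
move=> le_kv cut_k.
have Ev : v = take k v ++ take kappa (drop k v) ++ drop kappa (drop k v).
  by rewrite !cat_take_drop.
rewrite {1 2}Ev; apply: valid_fact_of_cut_cat; first by rewrite size_takel // size_drop; lia.
by rewrite -Ev size_takel //; lia.
Qed.

Lemma valid_cut_of_fact pi v beta g a b : valid pi g a b -> pi = v ++ beta ++ wb v ->
  size g <= size v -> valid_cut v beta (size g).
Proof.
move=> [Epi [_ accL]] Epi' le_gv.
have Ev : v = take (size g) v ++ drop (size g) v by rewrite cat_take_drop.
have size_take_v : size (take (size g) v) = size g by rewrite size_takel.
have [Eg Erest] : take (size g) v = g /\
    drop (size g) v ++ beta ++ wb v = a ++ b ++ wb a ++ wb g.
  by apply: cat_inj size_take_v; rewrite catA -Ev -Epi'.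
rewrite /valid_cut Erest.
suff -> : v ++ beta ++ wb (drop (size g) v) = g ++ a ++ b ++ wb a by [].
apply: (proj1 (@cat_inj_suffix _ _ (wb g) _ (wb g) _ _)) => //; rewrite -!catA.
have -> : wb (drop (size g) v) ++ wb g = wb v by rewrite -{2}Eg -wbar_cat -Ev.
by rewrite -Epi' Epi.
Qed.

Definition bridge_pair (v beta : seq S) : bstate Q1 Q2 * bstate Q1 Q2 :=
  (((q01, q02), run d1 (run d1 q01 (v ++ beta)) (wb v),
     run d2 (run d2 (run d2 q02 v) (wb beta)) (wb v), 0),
   ((run d1 q01 v, run d2 q02 v), run d1 q01 (v ++ beta),
     run d2 (run d2 q02 v) (wb beta), kappa)).

Lemma inM_bridge_pair mu beta v : inMA mu -> BA mu beta -> RA mu v ->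
  mu = bridge_pair v beta.
Proof.
case: mu => [[[[P0 q10] q20] l0] [[[[pf1 pf2] q1f] q2f] lf]].
case=> [[_ [x1 [x2 [-> -> -> ->]]]] [_ /= ->]] [/= <- <-] /labels_path_runs /=.
by rewrite run_step12 /= => -[[-> ->] -> ->]; rewrite /bridge_pair run_cat.
Qed.

Lemma min_ga_prefix_path mu beta v : inMA mu -> BA mu beta -> RA mu v ->
  min_prefix (v ++ beta ++ wb v) v.
Proof.
move=> Mmu Bbeta Rv; have Emu := inM_bridge_pair Mmu Bbeta Rv; rewrite /R_mu Emu in Rv.
have [le_kv before first] := labels_path_first_cut Rv erefl erefl.
set t := size v - kappa in before first.
exists (take t v), (drop t v), beta; split; [split|split].
- by rewrite -[in LHS](cat_take_drop t v) wbar_cat -!catA.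
- split; first by rewrite size_drop; lia.
  by rewrite catA !cat_take_drop -wbar_cat cat_take_drop; apply: (valid_cutE v beta t).1.
- by rewrite cat_take_drop.
- move=> g' a' b' fact'; rewrite size_takel ?leq_subr // leqNgt; apply/negP => lt_g't.
  by apply: (before _ lt_g't); apply/valid_cutE/(valid_cut_of_fact fact') => //; lia.
Qed.

Lemma path_of_first_cut v beta t : size v = t + kappa ->
  (forall k, k < t -> ~ valid_cut v beta k) -> valid_cut v beta t ->
  exists mu, [/\ inMA mu, BA mu beta & RA mu v].
Proof.
move=> size_v before cut_t.
have [x0 _] : exists x0 : S, True by case: v size_v {before cut_t} => [|a v] /=; [lia | exists a].
set e1 := run d1 q01 (v ++ beta); set e2 := run d2 (run d2 q02 v) (wb beta).
pose u k : bstate Q1 Q2 := ((run d1 q01 (take k v), run d2 q02 (take k v)),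
   run d1 e1 (wb (drop k v)), run d2 e2 (wb (drop k v)), k - t).
have bridge_u k : k <= size v -> bridge (u k).
  move=> le_kv; split; first by exists (take k v).
  split; last by rewrite /=; lia.
  exists (drop k v ++ beta ++ wb (drop k v)); split=> /=.
    by rewrite /e1 -!run_cat !catA cat_take_drop.
  by rewrite /e2 !wbar_cat (wbarK barK) -!run_cat !catA cat_take_drop.
have arc_u k : k < size v -> arcA (u k) (nth x0 v k) (u k.+1).
  move=> lt_kv; have cut_k := valid_cutE v beta k.
  rewrite -/e1 -/e2 (drop_nth x0 lt_kv) wbar_cons !run_rcons in cut_k.
  exists (run d1 q01 (take k v), run d2 q02 (take k v)),
    (run d1 e1 (wb (drop k.+1 v))), (run d2 e2 (wb (drop k.+1 v))), (k - t), (k.+1 - t).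
  split; first by rewrite /u (drop_nth x0 lt_kv) wbar_cons !run_rcons.
  split; first by rewrite /u (take_nth x0 lt_kv) !run_rcons.
  split; first by apply: bridge_u; lia.
  split; first by apply: bridge_u; lia.
  case: (ltngtP k t) => [lt_kt|gt_kt|Ekt].
  - by constructor 1; split; try lia; apply/negP => acc; apply: (before k lt_kt);
      apply/cut_k; [left | right].
  - by constructor 3; split; lia.
  - by constructor 2; split; try lia; apply/cut_k; rewrite Ekt.
have path_u k : k <= size v -> pathA (u k) (drop k v) (u (size v)).
  move: {2}(size v - k) (erefl (size v - k)) => n; elim: n k => [|n IHn] k En le_kv.
    by rewrite (_ : k = size v) ?drop_size //; lia.
  have lt_kv : k < size v by lia.
  by rewrite (drop_nth x0 lt_kv); exists (u k.+1); split; [apply: arc_u | apply: IHn; lia].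
exists (u 0, u (size v)); split.
- split; split; try exact: bridge_u.
    by exists (run d1 e1 (wb (drop 0 v))), (run d2 e2 (wb (drop 0 v))); rewrite /u take0 sub0n.
  by rewrite /=; lia.
- by rewrite /B_mu /Bset /= take_size drop_size /e1 /e2 run_cat.
- by have := path_u 0 (leq0n _); rewrite drop0.
Qed.

Lemma min_ga_prefix_uniq pi p p' : min_prefix pi p -> min_prefix pi p' -> p = p'.
Proof.
move=> [g [a [b [fact [-> least]]]]] [g' [a' [b' [fact' [-> least']]]]].
have le_gg' := least _ _ _ fact'; have le_g'g := least' _ _ _ fact.
case: fact fact' => [Epi [size_a _]] [Epi' [size_a' _]].
have size_ga : size (g ++ a) = size (g' ++ a') by rewrite !size_cat size_a size_a'; lia.
have := congr1 (take (size (g ++ a))) Epi'; rewrite {1}Epi catA take_size_cat //.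
by rewrite size_ga catA take_size_cat.
Qed.

Local Notation hcompA mu := (hcomp bar (BA mu) (RA mu)).

Lemma Hk_cover pi : Hk bar kappa L1 L2 pi <-> exists mu, inMA mu /\ hcompA mu pi.
Proof.
split=> [[g [a [b [Epi [le_ka accL]]]]]|]; last first.
  move=> [mu [Mmu [beta [v [Bbeta [Rv ->]]]]]].
  have [g [a [b [[Epi [size_a accL]] _]]]] := min_ga_prefix_path Mmu Bbeta Rv.
  by exists g, a, b; rewrite size_a.
have : exists n g a b, valid pi g a b /\ size g = n.
  have Epi' : pi = (g ++ a) ++ b ++ wb (g ++ a) by rewrite Epi wbar_cat -!catA.
  have cut_g : valid_cut (g ++ a) b (size g).
    by rewrite /valid_cut drop_size_cat // wbar_cat -!catA.
  have := valid_fact_of_cut _ cut_g; rewrite -Epi' size_cat leq_add2l => /(_ le_ka) fact.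
  by do 4 eexists; split; first exact: fact.
move=> /exists_least_nat [_ [[g0 [a0 [b0 [fact0 <-]]]] least]].
set v := g0 ++ a0.
have Epi0 : pi = v ++ b0 ++ wb v by case: fact0 => ->; rewrite wbar_cat -!catA.
have size_v : size v = size g0 + kappa by case: fact0 => _ [size_a0 _]; rewrite size_cat size_a0.
have no_earlier_cut k : k < size g0 -> ~ valid_cut v b0 k.
  move=> lt_kg0 cut_k; suff /least : exists g a b, valid pi g a b /\ size g = k.
    by rewrite leqNgt lt_kg0.
  have le_kv : k + kappa <= size v by lia.
  have := valid_fact_of_cut le_kv cut_k; rewrite -Epi0 => fact.
  by do 3 eexists; split; [exact: fact | rewrite size_takel //; lia].
have cut_g0 : valid_cut v b0 (size g0).
  by apply: (valid_cut_of_fact fact0 Epi0); rewrite size_v leq_addr.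
have [mu [Mmu Bb0 Rv]] := path_of_first_cut size_v no_earlier_cut cut_g0.
by exists mu; split=> //; exists b0, v.
Qed.

Lemma hcomp_disjoint mu mu' : inMA mu -> inMA mu' -> mu <> mu' ->
  forall pi, ~ (hcompA mu pi /\ hcompA mu' pi).
Proof.
move=> Mmu Mmu' neq_mu pi [[beta [v [Bbeta [Rv Epi]]]] [beta' [v' [Bbeta' [Rv' Epi']]]]].
have minv := min_ga_prefix_path Mmu Bbeta Rv; have minv' := min_ga_prefix_path Mmu' Bbeta' Rv'.
rewrite -Epi in minv; rewrite -Epi' in minv'.
have Ev := min_ga_prefix_uniq minv minv'; subst v'.
have [_ Erest] := cat_inj (etrans (esym Epi) Epi') erefl.
have [Ebeta _] := cat_inj_suffix Erest erefl; subst beta'; apply: neq_mu.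
by rewrite (inM_bridge_pair Mmu Bbeta Rv) (inM_bridge_pair Mmu' Bbeta' Rv').
Qed.

End Automaton.

Theorem lemma1 (S : finType) (bar : S -> S) (kappa : nat)
  (Q1 Q2 : finType)
  (d1 : Q1 -> S -> Q1) (q01 : Q1) (F1 : {set Q1})
  (d2 : Q2 -> S -> Q2) (q02 : Q2) (F2 : {set Q2})
  (L1 L2 : seq S -> Prop) :
  1 < #|S| ->
  involutive bar ->
  0 < kappa ->
  (forall w, L1 w <-> run d1 q01 w \in F1) ->
  (forall w, (exists u, L2 u /\ w = wbar bar u) <-> run d2 q02 w \in F2) ->
  [/\ (forall pi, Hk bar kappa L1 L2 pi <->
         exists mu, inM bar kappa d1 q01 d2 q02 mu /\
           hcomp bar (B_mu bar d1 d2 mu) (R_mu bar kappa d1 q01 F1 d2 q02 F2 mu) pi),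
      (forall mu mu', inM bar kappa d1 q01 d2 q02 mu ->
         inM bar kappa d1 q01 d2 q02 mu' -> mu <> mu' ->
         forall pi, ~ (hcomp bar (B_mu bar d1 d2 mu) (R_mu bar kappa d1 q01 F1 d2 q02 F2 mu) pi /\
                       hcomp bar (B_mu bar d1 d2 mu') (R_mu bar kappa d1 q01 F1 d2 q02 F2 mu') pi))
    & (forall mu beta v, inM bar kappa d1 q01 d2 q02 mu ->
         B_mu bar d1 d2 mu beta -> R_mu bar kappa d1 q01 F1 d2 q02 F2 mu v ->
         min_ga_prefix bar kappa L1 L2 (v ++ beta ++ wbar bar v) v)].
Proof.
move=> _ barK kappa_gt0 L1E L2E; split.
- exact: Hk_cover barK kappa_gt0 L1E L2E.
- exact: hcomp_disjoint barK kappa_gt0 L1E L2E.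
- exact: min_ga_prefix_path barK kappa_gt0 L1E L2E.
Qed.
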